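(* Let $N$ be odd. Define $V:\mathbb{R}\to\mathbb{R}$ by $V(\theta)=\frac{2}{\pi}|\theta-\frac{\pi}{2}|$ for $\theta\in[0,\pi]$, extended to be $\pi$-periodic on $\mathbb{R}$, and define $F_V(\theta_1,\dots,\theta_N)=\sum_{k=1}^N\sum_{\ell\neq k}V(\theta_k-\theta_\ell)$ for $(\theta_1,\dots,\theta_N)\in\mathbb{R}^N$. Then the configuration $\Theta_N^\perp=(0,\dots,0,\frac{\pi}{2},\dots,\frac{\pi}{2})$, with $(N+1)/2$ entries equal to $0$ and $(N-1)/2$ entries equal to $\frac{\pi}{2}$, is a global minimizer of $F_V$, and the global minimum value is $F_V(\Theta_N^\perp)=(N-1)^2/2$. *)

From Stdlib Require Import Reals Lra Lia Arith.
Open Scope R_scope.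

(* floor of a real number: Int_part r = up r - 1 is the floor. *)
Definition rfloor (x : R) : R := IZR (Int_part x).

(* V(theta) = (2/pi) |theta - pi/2| on [0, pi], extended pi-periodically:
   reduce theta to theta' = theta - pi * floor(theta/pi) in [0, pi). *)
Definition V (theta : R) : R :=
  let t := theta - PI * rfloor (theta / PI) in
  (2 / PI) * Rabs (t - PI / 2).

Fixpoint sumn_R (n : nat) (f : nat -> R) : R :=
  match n with
  | O => 0
  | S m => sumn_R m f + f m
  end.

(* F_V(theta_1..theta_N) = sum_k sum_{l <> k} V(theta_k - theta_l);
   configurations are indexed 0..N-1 (entries beyond N-1 are irrelevant). *)
Definition F_V (N : nat) (theta : nat -> R) : R :=
  sumn_R N (fun k => sumn_R N (fun l =>
    if Nat.eqb l k then 0 else V (theta k - theta l))).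

Definition Theta_perp (N : nat) (k : nat) : R :=
  if Nat.ltb k ((N + 1) / 2) then 0 else PI / 2.

From Stdlib Require Import Reals Lra Lia List Permutation Sorted Mergesort Orders ROrderedType.
Open Scope R_scope.

(* V(x) = 1 - (2/π) dist(x, πℤ), so minimising F_V means spreading the angles on the
   circle ℝ/πℤ.  Reduce the angles to [0, π) and sort them, y_0 <= ... <= y_2m, and call
   a pair k <> l near if |k - l| <= m and far otherwise.  For near pairs
   V(y_k - y_l) >= 1 - (2/π)|y_k - y_l|, and for far pairs, after a shift by π,
   V(y_k - y_l) >= (2/π)|y_k - y_l| - 1.  In each row k, y_k enters these affine bounds
   with one sign for m indices l and with the opposite sign for the other m, so the linear
   terms cancel in the sum, leaving N(N-1) - 2 #{far pairs} = N(N-1) - 2m(m+1) = (N-1)^2/2.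
   At Θ⊥ every bound is an equality. *)

Lemma sumn_R_ext n f g :
  (forall i, (i < n)%nat -> f i = g i) -> sumn_R n f = sumn_R n g.
Proof. induction n as [|n IH]; intros H; simpl; [reflexivity|]. rewrite IH, H; auto. Qed.

Lemma sumn_R_le n f g :
  (forall i, (i < n)%nat -> f i <= g i) -> sumn_R n f <= sumn_R n g.
Proof.
  induction n as [|n IH]; intros H; simpl; [lra|].
  apply Rplus_le_compat; auto.
Qed.

Lemma sumn_R_minus n f g : sumn_R n (fun i => f i - g i) = sumn_R n f - sumn_R n g.
Proof. induction n as [|n IH]; simpl; [ring|]. rewrite IH; ring. Qed.

Lemma sumn_R_scal_l n c f : sumn_R n (fun i => c * f i) = c * sumn_R n f.
Proof. induction n as [|n IH]; simpl; [ring|]. rewrite IH; ring. Qed.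

Lemma sumn_R_const n c : sumn_R n (fun _ => c) = INR n * c.
Proof. induction n as [|n IH]; [simpl; ring|]. rewrite S_INR. simpl. rewrite IH; ring. Qed.

Lemma sumn_R_shift n f : sumn_R (S n) f = f O + sumn_R n (fun i => f (S i)).
Proof. induction n as [|n IH]; simpl in *; [ring|]. rewrite IH; ring. Qed.

Lemma sumn_R_swap n p f :
  sumn_R n (fun k => sumn_R p (fun l => f k l))
  = sumn_R p (fun l => sumn_R n (fun k => f k l)).
Proof.
  induction n as [|n IH]; simpl.
  - induction p as [|p IHp]; simpl; [reflexivity|]. rewrite <- IHp; ring.
  - rewrite IH. clear IH. induction p as [|p IHp]; simpl; [ring|]. rewrite <- IHp; ring.
Qed.

Lemma sumn_R_drop n k f : (k < n)%nat ->
  sumn_R n (fun l => if Nat.eqb l k then 0 else f l) = sumn_R n f - f k.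
Proof.
  induction n as [|n IH]; intros Hk; [lia|]. simpl.
  destruct (Nat.eqb_spec n k) as [->|Hnk].
  - rewrite (sumn_R_ext _ _ f); [ring|].
    intros i Hi. destruct (Nat.eqb_spec i k); [lia|reflexivity].
  - rewrite IH by lia. ring.
Qed.

Lemma sumn_R_const_segment a b c f :
  (forall i, (a <= i < a + b)%nat -> f i = c) -> sumn_R (a + b) f = sumn_R a f + INR b * c.
Proof.
  induction b as [|b IH]; intros H; [rewrite Nat.add_0_r; simpl; ring|].
  rewrite Nat.add_succ_r, S_INR. simpl.
  rewrite IH by (intros; apply H; lia). rewrite H by lia. ring.
Qed.

Lemma sumn_R_piecewise4 a b c d v1 v2 v3 v4 f :
  (forall i, (i < a)%nat -> f i = v1) ->
  (forall i, (a <= i < a + b)%nat -> f i = v2) ->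
  (forall i, (a + b <= i < a + b + c)%nat -> f i = v3) ->
  (forall i, (a + b + c <= i < a + b + c + d)%nat -> f i = v4) ->
  sumn_R (a + b + c + d) f = INR a * v1 + INR b * v2 + INR c * v3 + INR d * v4.
Proof.
  intros H1 H2 H3 H4.
  rewrite (sumn_R_const_segment _ _ v4), (sumn_R_const_segment _ _ v3),
    (sumn_R_const_segment _ _ v2) by assumption.
  rewrite <- (Nat.add_0_l a), (sumn_R_const_segment _ _ v1) by (intros; apply H1; lia).
  simpl. ring.
Qed.

Lemma sumn_R_dist_to_middle m :
  sumn_R (2 * m + 1) (fun k => INR (k - m + (m - k))) = INR m * (INR m + 1).
Proof.
  induction m as [|m IH]; [simpl; ring|].
  replace (2 * S m + 1)%nat with (S (S (2 * m + 1))) by lia.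
  rewrite sumn_R_shift. cbn [sumn_R].
  rewrite (sumn_R_ext _ _ (fun k => INR (k - m + (m - k)))) by reflexivity.
  rewrite IH.
  replace (S (2 * m + 1) - S m + (S m - S (2 * m + 1)))%nat with (S m) by lia.
  replace (0 - S m + (S m - 0))%nat with (S m) by lia.
  rewrite S_INR. ring.
Qed.

Lemma rfloor_eq r (z : Z) : IZR z <= r < IZR z + 1 -> rfloor r = IZR z.
Proof. intros Hr. unfold rfloor. f_equal. symmetry. apply Int_part_spec. lra. Qed.

Lemma rfloor_range r : rfloor r <= r < rfloor r + 1.
Proof. unfold rfloor. destruct (base_Int_part r). lra. Qed.

Lemma rfloor_add_int r z : rfloor (r + IZR z) = rfloor r + IZR z.
Proof.
  destruct (rfloor_range r). unfold rfloor in *.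
  rewrite <- plus_IZR. apply rfloor_eq. rewrite plus_IZR. lra.
Qed.

Lemma rfloor_div_PI x (z : Z) : IZR z * PI <= x < IZR z * PI + PI -> rfloor (x / PI) = IZR z.
Proof.
  intros Hx. pose proof PI_RGT_0. apply rfloor_eq.
  assert (x = x / PI * PI) as Ex by (field; lra).
  rewrite Ex in Hx. split; nra.
Qed.

Definition mod_PI (x : R) : R := x - PI * rfloor (x / PI).

Lemma mod_PI_range x : 0 <= mod_PI x < PI.
Proof.
  pose proof PI_RGT_0. destruct (rfloor_range (x / PI)).
  assert (x = x / PI * PI) by (field; lra).
  unfold mod_PI. split; nra.
Qed.

Lemma V_periodic x z : V (x + IZR z * PI) = V x.
Proof.
  pose proof PI_neq0. unfold V; cbv zeta.
  replace ((x + IZR z * PI) / PI) with (x / PI + IZR z) by (field; assumption).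
  rewrite rfloor_add_int. do 3 f_equal. ring.
Qed.

Lemma V_mod_PI_sub a b : V (mod_PI a - mod_PI b) = V (a - b).
Proof.
  replace (mod_PI a - mod_PI b)
    with (a - b + IZR (Int_part (b / PI) - Int_part (a / PI)) * PI)
    by (unfold mod_PI, rfloor; rewrite minus_IZR; ring).
  apply V_periodic.
Qed.

Lemma V_tent x : Rabs x <= PI / 2 -> V x = 1 - 2 / PI * Rabs x.
Proof.
  intros Hx. pose proof PI_RGT_0. unfold V; cbv zeta.
  destruct (Rle_or_lt 0 x).
  - rewrite (Rabs_right x) in * by lra.
    rewrite (rfloor_div_PI x 0) by lra. rewrite Rabs_left1 by lra. field. lra.
  - rewrite (Rabs_left x) in * by lra.
    rewrite (rfloor_div_PI x (-1)) by lra. rewrite Rabs_right by lra. field. lra.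
Qed.

Lemma V_ge_tent x : 1 - 2 / PI * Rabs x <= V x.
Proof.
  pose proof PI_RGT_0.
  destruct (Rle_or_lt (Rabs x) (PI / 2)); [rewrite V_tent; lra|].
  assert (0 < 2 / PI) by (apply Rdiv_lt_0_compat; lra).
  assert (0 <= V x) by (unfold V; apply Rmult_le_pos; [lra | apply Rabs_pos]).
  assert (2 / PI * Rabs x > 2 / PI * (PI / 2)) by (apply Rmult_gt_compat_l; lra).
  replace (2 / PI * (PI / 2)) with 1 in * by (field; lra). lra.
Qed.

Lemma V_ge_far x : Rabs x <= PI -> 2 / PI * Rabs x - 1 <= V x.
Proof.
  intros Hx. pose proof PI_RGT_0.
  destruct (Rle_or_lt 0 x).
  - rewrite <- (V_periodic x (-1)).
    eapply Rle_trans; [|apply V_ge_tent].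
    rewrite Rabs_right in Hx |- * by lra. rewrite Rabs_left1 by lra.
    right. field. lra.
  - rewrite <- (V_periodic x 1).
    eapply Rle_trans; [|apply V_ge_tent].
    rewrite Rabs_left in Hx |- * by lra. rewrite Rabs_right by lra.
    right. field. lra.
Qed.

Lemma V_0 : V 0 = 1.
Proof. rewrite V_tent; rewrite Rabs_R0; [ring | pose proof PI_RGT_0; lra]. Qed.

Lemma V_half_PI : V (PI / 2) = 0.
Proof.
  pose proof PI_RGT_0.
  rewrite V_tent; rewrite Rabs_right by lra; [field|]; lra.
Qed.

Lemma V_neg_half_PI : V (- (PI / 2)) = 0.
Proof.
  pose proof PI_RGT_0.
  rewrite V_tent; rewrite Rabs_Ropp, Rabs_right by lra; [field|]; lra.
Qed.

Lemma Theta_perp_odd m k : Theta_perp (2 * m + 1) k = if (k <=? m)%nat then 0 else PI / 2.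
Proof.
  unfold Theta_perp.
  replace ((2 * m + 1 + 1) / 2)%nat with (S m)
    by (replace (2 * m + 1 + 1)%nat with (S m * 2)%nat by lia; rewrite Nat.div_mul; lia).
  destruct (Nat.ltb_spec k (S m)), (Nat.leb_spec k m); lia || reflexivity.
Qed.

Ltac decide_nat_tests :=
  repeat match goal with
  | |- context [Nat.eqb ?a ?b] => destruct (Nat.eqb_spec a b)
  | |- context [Nat.ltb ?a ?b] => destruct (Nat.ltb_spec a b)
  | |- context [Nat.leb ?a ?b] => destruct (Nat.leb_spec a b)
  end; cbn [orb]; try lia; try lra.

Section SortedConfiguration.

Variable m : nat.

Local Notation N := (2 * m + 1)%nat.

Definition far (k l : nat) : bool := (m <? k - l)%nat || (m <? l - k)%nat.

Definition far_indicator (k l : nat) : R := if far k l then 1 else 0.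

(* [pair_sign k l = 1] iff [k] is one of the [m] cyclic successors of [l] modulo [N],
   and [-1] iff [l] is one of those of [k]. *)
Definition pair_sign (k l : nat) : R :=
  if (k =? l)%nat then 0
  else if (l <? k)%nat then (if far k l then -1 else 1)
  else (if far k l then 1 else -1).

Definition pair_bound (y : nat -> R) (k l : nat) : R :=
  (if (l =? k)%nat then 0 else 1) - 2 * far_indicator k l
  - 2 / PI * (pair_sign k l * (y k - y l)).

Lemma pair_sign_antisym k l : pair_sign k l = - pair_sign l k.
Proof. unfold pair_sign, far. decide_nat_tests. Qed.

Lemma pair_sign_row_sum k : (k < N)%nat -> sumn_R N (pair_sign k) = 0.
Proof.
  intros Hk. destruct (Nat.le_gt_cases k m).
  - replace N with (k + 1 + m + (m - k))%nat by lia.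
    rewrite (sumn_R_piecewise4 _ _ _ _ 1 0 (-1) 1);
      [rewrite minus_INR by lia; simpl; ring | ..];
      intros i Hi; unfold pair_sign, far; decide_nat_tests.
  - replace N with (k - m + m + 1 + (2 * m - k))%nat by lia.
    rewrite (sumn_R_piecewise4 _ _ _ _ (-1) 1 0 (-1));
      [rewrite !minus_INR, mult_INR by lia; simpl; ring | ..];
      intros i Hi; unfold pair_sign, far; decide_nat_tests.
Qed.

Lemma pair_sign_col_sum l : (l < N)%nat -> sumn_R N (fun k => pair_sign k l) = 0.
Proof.
  intros Hl.
  rewrite (sumn_R_ext _ _ (fun k => -1 * pair_sign l k))
    by (intros; rewrite pair_sign_antisym; ring).
  rewrite sumn_R_scal_l, pair_sign_row_sum by exact Hl. ring.
Qed.

Lemma far_row_count k : (k < N)%nat -> sumn_R N (far_indicator k) = INR (k - m + (m - k)).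
Proof.
  intros Hk. destruct (Nat.le_gt_cases k m).
  - replace N with (k + 1 + m + (m - k))%nat by lia.
    rewrite (sumn_R_piecewise4 _ _ _ _ 0 0 0 1);
      [replace (k - m + (m - k))%nat with (m - k)%nat by lia; ring | ..];
      intros i Hi; unfold far_indicator, far; decide_nat_tests.
  - replace N with (k - m + m + 1 + (2 * m - k))%nat by lia.
    rewrite (sumn_R_piecewise4 _ _ _ _ 1 0 0 0);
      [replace (k - m + (m - k))%nat with (k - m)%nat by lia; ring | ..];
      intros i Hi; unfold far_indicator, far; decide_nat_tests.
Qed.

Lemma far_count :
  sumn_R N (fun k => sumn_R N (far_indicator k)) = INR m * (INR m + 1).
Proof.
  rewrite (sumn_R_ext _ _ (fun k => INR (k - m + (m - k)))) by exact far_row_count.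
  apply sumn_R_dist_to_middle.
Qed.

Lemma offdiag_count :
  sumn_R N (fun k => sumn_R N (fun l => if (l =? k)%nat then 0 else 1)) = INR N * (INR N - 1).
Proof.
  rewrite (sumn_R_ext _ _ (fun _ => INR N - 1)).
  - rewrite sumn_R_const. ring.
  - intros k Hk. rewrite (sumn_R_drop _ _ (fun _ => 1)), sumn_R_const by exact Hk. ring.
Qed.

Lemma pair_sign_weighted_sum y :
  sumn_R N (fun k => sumn_R N (fun l => pair_sign k l * (y k - y l))) = 0.
Proof.
  rewrite (sumn_R_ext _ _
    (fun k => y k * sumn_R N (pair_sign k) - sumn_R N (fun l => y l * pair_sign k l))).
  2: { intros k _. rewrite <- sumn_R_scal_l, <- sumn_R_minus.
       apply sumn_R_ext. intros l _. ring. }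
  rewrite sumn_R_minus, sumn_R_swap.
  rewrite (sumn_R_ext _ _ (fun _ => 0)) at 1
    by (intros k Hk; rewrite pair_sign_row_sum by exact Hk; ring).
  rewrite (sumn_R_ext _ (fun l => sumn_R N _) (fun _ => 0))
    by (intros l Hl; rewrite sumn_R_scal_l, pair_sign_col_sum by exact Hl; ring).
  ring.
Qed.

Lemma pair_bound_sum y :
  sumn_R N (fun k => sumn_R N (pair_bound y k)) = 2 * INR m ^ 2.
Proof.
  unfold pair_bound.
  rewrite (sumn_R_ext _ _ (fun k =>
      sumn_R N (fun l => if (l =? k)%nat then 0 else 1) - 2 * sumn_R N (far_indicator k)
      - 2 / PI * sumn_R N (fun l => pair_sign k l * (y k - y l))))
    by (intros; rewrite !sumn_R_minus, !sumn_R_scal_l; reflexivity).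
  rewrite !sumn_R_minus, !sumn_R_scal_l, offdiag_count, far_count, pair_sign_weighted_sum.
  rewrite plus_INR, mult_INR. simpl. ring.
Qed.

Lemma pair_bound_diag y k : pair_bound y k k = 0.
Proof. unfold pair_bound, far_indicator, pair_sign, far. decide_nat_tests. Qed.

Lemma pair_bound_le_V y k l :
  (forall i j, (i <= j < N)%nat -> y i <= y j) ->
  (forall i, (i < N)%nat -> 0 <= y i < PI) ->
  (k < N)%nat -> (l < N)%nat -> k <> l ->
  pair_bound y k l <= V (y k - y l).
Proof.
  intros Hsorted Hrange Hk Hl Hkl.
  pose proof (Hrange k Hk). pose proof (Hrange l Hl).
  pose proof (V_ge_tent (y k - y l)) as Hnear.
  assert (Hfar : 2 / PI * Rabs (y k - y l) - 1 <= V (y k - y l))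
    by (apply V_ge_far; unfold Rabs; destruct Rcase_abs; lra).
  unfold pair_bound, far_indicator, pair_sign, far.
  destruct (Nat.lt_total l k) as [Hlk|[Hlk|Hlk]]; [| lia |].
  - assert (y l <= y k) by (apply Hsorted; lia).
    rewrite Rabs_right in Hnear, Hfar by lra. decide_nat_tests.
  - assert (y k <= y l) by (apply Hsorted; lia).
    rewrite Rabs_left1 in Hnear, Hfar by lra. decide_nat_tests.
Qed.

Lemma pair_bound_Theta_perp k l :
  (k < N)%nat -> (l < N)%nat -> k <> l ->
  pair_bound (Theta_perp N) k l = V (Theta_perp N k - Theta_perp N l).
Proof.
  intros Hk Hl Hkl. pose proof PI_RGT_0.
  unfold pair_bound, far_indicator, pair_sign, far. rewrite !Theta_perp_odd.
  decide_nat_tests;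
    rewrite ?Rminus_diag, ?Rminus_0_r, ?Rminus_0_l, ?V_0, ?V_half_PI, ?V_neg_half_PI;
    field; lra.
Qed.

Lemma F_V_sorted_lower_bound y :
  (forall i j, (i <= j < N)%nat -> y i <= y j) ->
  (forall i, (i < N)%nat -> 0 <= y i < PI) ->
  2 * INR m ^ 2 <= F_V N y.
Proof.
  intros Hsorted Hrange. rewrite <- (pair_bound_sum y). unfold F_V.
  apply sumn_R_le. intros k Hk. apply sumn_R_le. intros l Hl.
  destruct (Nat.eqb_spec l k) as [->|Hlk].
  - rewrite pair_bound_diag. lra.
  - apply pair_bound_le_V; auto.
Qed.

Lemma F_V_Theta_perp : F_V N (Theta_perp N) = 2 * INR m ^ 2.
Proof.
  rewrite <- (pair_bound_sum (Theta_perp N)). unfold F_V.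
  apply sumn_R_ext. intros k Hk. apply sumn_R_ext. intros l Hl.
  destruct (Nat.eqb_spec l k) as [->|Hlk].
  - rewrite pair_bound_diag. reflexivity.
  - symmetry. apply pair_bound_Theta_perp; auto.
Qed.

End SortedConfiguration.

Lemma F_V_ext n x y : (forall k, (k < n)%nat -> x k = y k) -> F_V n x = F_V n y.
Proof.
  intros H. unfold F_V. apply sumn_R_ext. intros k Hk. apply sumn_R_ext. intros l Hl.
  rewrite !H by assumption. reflexivity.
Qed.

Lemma F_V_mod_PI n x : F_V n (fun k => mod_PI (x k)) = F_V n x.
Proof.
  unfold F_V. apply sumn_R_ext. intros k _. apply sumn_R_ext. intros l _.
  rewrite V_mod_PI_sub. reflexivity.
Qed.

Lemma F_V_full_sum n x :
  F_V n x = sumn_R n (fun k => sumn_R n (fun l => V (x k - x l))) - INR n.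
Proof.
  unfold F_V.
  rewrite (sumn_R_ext _ _ (fun k => sumn_R n (fun l => V (x k - x l)) - 1)).
  - rewrite sumn_R_minus, sumn_R_const. ring.
  - intros k Hk. rewrite (sumn_R_drop _ _ (fun l => V (x k - x l))) by exact Hk.
    rewrite Rminus_diag, V_0. reflexivity.
Qed.

Definition sum_list (g : R -> R) (L : list R) : R := fold_right (fun a s => g a + s) 0 L.

Lemma sum_list_nth g L : sum_list g L = sumn_R (length L) (fun k => g (nth k L 0)).
Proof.
  induction L as [|a L IH]; [reflexivity|].
  cbn [length]. rewrite sumn_R_shift. simpl. rewrite IH. reflexivity.
Qed.

Lemma sum_list_ext g h L : (forall a, g a = h a) -> sum_list g L = sum_list h L.
Proof.
  intros H. induction L as [|a L IH]; simpl; [reflexivity|]. rewrite H, IH. reflexivity.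
Qed.

Lemma sum_list_perm g L L' : Permutation L L' -> sum_list g L = sum_list g L'.
Proof. induction 1; simpl; lra. Qed.

Lemma F_V_nth_perm L L' : Permutation L L' ->
  F_V (length L) (fun k => nth k L 0) = F_V (length L') (fun k => nth k L' 0).
Proof.
  intros HP.
  assert (Hpairs : forall L0, sumn_R (length L0) (fun k => sumn_R (length L0)
            (fun l => V (nth k L0 0 - nth l L0 0)))
          = sum_list (fun a => sum_list (fun b => V (a - b)) L0) L0).
  { intros L0. rewrite sum_list_nth. apply sumn_R_ext. intros k _.
    rewrite sum_list_nth. reflexivity. }
  rewrite !F_V_full_sum, !Hpairs, (Permutation_length HP), (sum_list_perm _ _ _ HP).
  f_equal. apply sum_list_ext. intros a. apply sum_list_perm, HP.
Qed.

Lemma StronglySorted_nth (P : R -> R -> Prop) L d : StronglySorted P L ->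
  forall i j, (i < j < length L)%nat -> P (nth i L d) (nth j L d).
Proof.
  induction 1 as [|a L _ IH HF]; simpl; intros i j Hij; [lia|].
  destruct i, j; try lia.
  - rewrite Forall_forall in HF. apply HF, nth_In. lia.
  - apply IH. lia.
Qed.

Module RLeBool := OTF_to_TTLB R_as_OT.
Module RSort := Sort RLeBool.

Lemma F_V_sorted_rearrangement n x : exists y,
  (forall i j, (i <= j < n)%nat -> y i <= y j) /\
  (forall i, (i < n)%nat -> exists j, (j < n)%nat /\ y i = x j) /\
  F_V n y = F_V n x.
Proof.
  set (L := map x (seq 0 n)).
  assert (Hlen : length L = n) by (unfold L; rewrite length_map, length_seq; reflexivity).
  pose proof (RSort.Permuted_sort L) as HP.
  pose proof (Permutation_length HP) as Hlen'.
  pose proof (RSort.StronglySorted_sort L RLeBool.leb_trans) as HS.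
  exists (fun k => nth k (RSort.sort L) 0). split; [|split].
  - intros i j Hij. destruct (Nat.eq_dec i j) as [->|Hne]; [lra|].
    apply RLeBool.leb_le, (StronglySorted_nth _ _ 0 HS). lia.
  - intros i Hi.
    assert (Hin : In (nth i (RSort.sort L) 0) L)
      by (apply (Permutation_in _ (Permutation_sym HP)), nth_In; lia).
    apply in_map_iff in Hin as (j & Hj & Hjn). apply in_seq in Hjn.
    exists j. split; [lia|symmetry; exact Hj].
  - transitivity (F_V (length L) (fun k => nth k L 0)).
    + rewrite (F_V_nth_perm _ _ HP), <- Hlen', Hlen. reflexivity.
    + rewrite Hlen. apply F_V_ext. intros k Hk. unfold L.
      rewrite nth_indep with (d' := x O), map_nth, seq_nth
        by (rewrite ?length_map, ?length_seq; lia).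
      reflexivity.
Qed.

Theorem proposition2p1 (N : nat) (hN : Nat.Odd N) :
  (forall theta : nat -> R, F_V N (Theta_perp N) <= F_V N theta) /\
  F_V N (Theta_perp N) = (INR N - 1) ^ 2 / 2.
Proof.
  destruct hN as [m ->].
  replace ((INR (2 * m + 1) - 1) ^ 2 / 2) with (2 * INR m ^ 2)
    by (rewrite plus_INR, mult_INR; simpl; field).
  rewrite F_V_Theta_perp. split; [|reflexivity].
  intros theta. rewrite <- F_V_mod_PI.
  destruct (F_V_sorted_rearrangement (2 * m + 1) (fun k => mod_PI (theta k)))
    as (y & Hsorted & Hvalues & <-).
  apply F_V_sorted_lower_bound; [exact Hsorted|].
  intros i Hi. destruct (Hvalues i Hi) as (j & _ & ->). apply mod_PI_range.
Qed.
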